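(* Let $\phi_{\mathrm p}$ be a Bregman kernel on $\mathbb R^n$ whose distance satisfies $d_{\mathrm p}(x,x')\ge\frac12\|x-x'\|^2$ (Euclidean norm), and $\phi_{\mathrm d}$ a Bregman kernel on $\mathbb R^m$ whose distance satisfies $d_{\mathrm d}(z,z')\ge\frac12\|z-z'\|_{\mathrm d}^2$ for a norm $\|\cdot\|_{\mathrm d}$. Let $A\in\mathbb R^{m\times n}$ with $\|A\|=\sup_{v\ne0}\|Av\|_{\mathrm d,*}/\|v\|$, where $\|\cdot\|_{\mathrm d,*}$ is the dual norm of $\|\cdot\|_{\mathrm d}$, and let $\sigma,\tau>0$ with $\sigma\tau\|A\|^2\le1$. Then the function \[\phi_{\mathrm{pd3o}}(x,y,z)=\frac1\tau\phi_{\mathrm p}(x)+\frac1\sigma\phi_{\mathrm d}(z)+\frac\tau2\|y\|^2-\langle y,x\rangle-\langle z,A(x-\tau y)\rangle\] (on $\operatorname{dom}\phi_{\mathrm p}\times\mathbb R^n\times\operatorname{dom}\phi_{\mathrm d}$) is convex; equivalently its Bregman distance \[d_{\mathrm{pd3o}}(x,y,z;x',y',z')=\tfrac1\tau d_{\mathrm p}(x,x')+\tfrac1\sigma d_{\mathrm d}(z,z')+\tfrac\tau2\|y-y'\|^2-\langle y-y',x-x'\rangle-\langle z-z',A(x-x')\rangle+\tau\langle z-z',A(y-y')\rangle\] is nonnegative.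
   Context: A Bregman kernel $\phi$ is convex with $\operatorname{int}(\operatorname{dom}\phi)\ne\emptyset$, continuous on $\operatorname{dom}\phi$ and continuously differentiable on $\operatorname{int}(\operatorname{dom}\phi)$; its distance is $d(x,y)=\phi(x)-\phi(y)-\langle\nabla\phi(y),x-y\rangle$ on $\operatorname{dom}\phi\times\operatorname{int}(\operatorname{dom}\phi)$. *)

From HB Require Import structures.
From mathcomp Require Import all_boot all_order all_algebra.
From mathcomp Require Import all_classical all_reals all_analysis.
Set Implicit Arguments. Unset Strict Implicit. Unset Printing Implicit Defensive.
Import Order.TTheory GRing.Theory Num.Theory.
Import numFieldNormedType.Exports.
Local Open Scope classical_set_scope.
Local Open Scope ring_scope.

Section Defs.
Variable R : realType.

Definition dotv (n : nat) (u v : 'cV[R]_n) : R := \sum_(i < n) u i 0 * v i 0.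

Definition enorm (n : nat) (v : 'cV[R]_n) : R := Num.sqrt (dotv v v).

Definition grad (n : nat) (phi : 'cV[R]_n -> R) (y : 'cV[R]_n) : 'cV[R]_n :=
  \col_(i < n) ('d phi y : 'cV[R]_n -> R) (delta_mx i 0).

Definition convex_set (n : nat) (D : set 'cV[R]_n) : Prop :=
  forall x y (t : R), D x -> D y -> 0 <= t <= 1 -> D (t *: x + (1 - t) *: y).

Definition convex_fun_on (n : nat) (D : set 'cV[R]_n) (f : 'cV[R]_n -> R) : Prop :=
  convex_set D /\
  forall x y (t : R), D x -> D y -> 0 <= t <= 1 ->
    f (t *: x + (1 - t) *: y) <= t * f x + (1 - t) * f y.

(* Bregman kernel with domain D (dom phi = D, phi real-valued on D) *)
Definition bregman_kernel (n : nat) (D : set 'cV[R]_n) (phi : 'cV[R]_n -> R) : Prop :=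
  [/\ convex_fun_on D phi,
      D° !=set0,
      {within D, continuous phi},
      (forall x, D° x -> differentiable phi x) &
      {within D°, continuous (grad phi)}].

(* Bregman distance d(x,y), meaningful for x in D, y in int D *)
Definition bregman_dist (n : nat) (phi : 'cV[R]_n -> R) (x y : 'cV[R]_n) : R :=
  phi x - phi y - dotv (grad phi y) (x - y).

Definition is_norm (m : nat) (N : 'cV[R]_m -> R) : Prop :=
  [/\ forall x, N x = 0 -> x = 0,
      forall (a : R) x, N (a *: x) = `|a| * N x &
      forall x y, N (x + y) <= N x + N y].

Definition dual_norm (m : nat) (N : 'cV[R]_m -> R) (u : 'cV[R]_m) : R :=
  sup [set dotv u z | z in [set z | N z <= 1]].

Definition op_norm (m n : nat) (N : 'cV[R]_m -> R) (A : 'M[R]_(m, n)) : R :=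
  sup [set dual_norm N (A *m v) / enorm v | v in [set v : 'cV[R]_n | v != 0]].

Definition convex3_on (n1 n2 n3 : nat) (D1 : set 'cV[R]_n1) (D2 : set 'cV[R]_n2)
    (D3 : set 'cV[R]_n3) (f : 'cV[R]_n1 -> 'cV[R]_n2 -> 'cV[R]_n3 -> R) : Prop :=
  forall x y z x' y' z' (t : R), D1 x -> D2 y -> D3 z -> D1 x' -> D2 y' -> D3 z' ->
    0 <= t <= 1 ->
    f (t *: x + (1 - t) *: x') (t *: y + (1 - t) *: y') (t *: z + (1 - t) *: z')
      <= t * f x y z + (1 - t) * f x' y' z'.

End Defs.

(* Besides the two kernels, [phi_pd3o] consists of the quadratic form
   [q(x, y, z) = tau/2 |y|^2 - <y, x> - <z, A (x - tau y)>].  Completing the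
   square and bounding the coupling term by Hölder and Young gives
   [q(a, b, c) >= - |a|^2/(2 tau) - N_d(c)^2/(2 sigma)] when
   [sigma tau ||A||^2 <= 1].  The Bregman lower bounds make [phi_p] and [phi_d]
   1-strongly convex for [|.|] and [N_d] (first when the convex combination is
   interior to the domain, then everywhere by continuity), and the convexity
   defect of [q] is [t (1 - t) q(x - x', y - y', z - z')], which the strong
   convexity of the kernels absorbs.  Nonnegativity of [d_pd3o] is the same
   bound on [q] combined with the Bregman lower bounds themselves. *)

From Pilot Require Import Defs.
From HB Require Import structures.
From mathcomp Require Import all_boot all_order all_algebra.
From mathcomp Require Import all_classical all_reals all_analysis.
From mathcomp Require Import ring lra.
Import Order.TTheory GRing.Theory Num.Theory.
Import numFieldNormedType.Exports.
Local Open Scope classical_set_scope.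
Local Open Scope ring_scope.

Lemma mx_entry_le_norm {R : realType} {p q : nat} (x : 'M[R]_(p, q)) i j :
  `|x i j| <= `|x|.
Proof. by rewrite [leRHS]mx_normrE; apply/bigmax_geP; right; exists (i, j). Qed.

Section Seminorm.
Context {R : realType} {p q : nat} {N : 'M[R]_(p, q) -> R}.
Hypothesis NZ : forall (a : R) x, N (a *: x) = `|a| * N x.
Hypothesis ND : forall x y, N (x + y) <= N x + N y.

Lemma seminorm0 : N 0 = 0.
Proof. by rewrite -(scale0r (0 : 'M[R]_(p, q))) NZ normr0 mul0r. Qed.

Lemma seminormN x : N (- x) = N x.
Proof. by rewrite -scaleN1r NZ normrN normr1 mul1r. Qed.

Lemma seminorm_ge0 x : 0 <= N x.
Proof. by have := ND x (- x); rewrite subrr seminorm0 seminormN; lra. Qed.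

Lemma seminorm_le_mx_norm x :
  N x <= `|x| * \sum_(ij : 'I_p * 'I_q) N (delta_mx ij.1 ij.2).
Proof.
rewrite {1}(matrix_sum_delta x) pair_bigA /= mulr_sumr.
elim/big_ind2: _ => [|a b a' b' ha hb|ij _]; first by rewrite seminorm0.
- by apply: le_trans (ND _ _) _; exact: lerD.
- by rewrite NZ ler_wpM2r ?seminorm_ge0 ?mx_entry_le_norm.
Qed.

Lemma seminorm_continuous : continuous N.
Proof.
move=> x; set C := \sum_(ij : 'I_p * 'I_q) N (delta_mx ij.1 ij.2).
have C0 : 0 <= C by apply: sumr_ge0 => ij _; exact: seminorm_ge0.
apply/(@cvgrPdist_le _ _ _ (nbhs x) _) => e e0; near=> y.
have Nxy : `|N x - N y| <= `|x - y| * (C + 1).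
  have := ND y (x - y); have := ND x (- (x - y)).
  rewrite seminormN opprB !subrKC.
  have := seminorm_le_mx_norm (x - y); have := normr_ge0 (x - y).
  by rewrite -/C ler_norml; nra.
apply: le_trans Nxy _; rewrite -ler_pdivlMr ?ltr_wpDl //.
by near: y; apply: cvgr_dist_le; [exact: cvg_id | rewrite divr_gt0 ?ltr_wpDl].
Unshelve. all: by end_near. Qed.

End Seminorm.

(* Equivalence of norms in finite dimension, by minimising [N] on the compact
   unit sphere of the sup norm; it makes the suprema defining [dual_norm] and
   [op_norm] finite. *)
Lemma is_norm_ge_entry {R : realType} {m : nat} {N : 'cV[R]_m -> R} :
  is_norm N -> exists2 mu, 0 < mu & forall (v : 'cV[R]_m) i, mu * `|v i 0| <= N v.
Proof.
case=> N0 NZ ND; case: m N N0 NZ ND => [|k] N N0 NZ ND.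
  by exists 1 => // v [].
pose f (r : 'rV[R]_k.+1) := N r^T.
have fZ a r : f (a *: r) = `|a| * f r by rewrite /f linearZ NZ.
have fD r r' : f (r + r') <= f r + f r' by rewrite /f linearD ND.
pose S := [set r : 'rV[R]_k.+1 | `|r| = 1].
have S0 : S !=set0.
  pose d : 'rV[R]_k.+1 := delta_mx 0 0.
  have d0 : d != 0 by apply/eqP => /matrixP/(_ 0 0)/eqP; rewrite !mxE oner_eq0.
  by exists (`|d|^-1 *: d); rewrite /S /= normrZ normfV normr_id mulVf ?normr_eq0.
have cS : compact S.
  apply: bounded_closed_compact.
    rewrite /bounded_set /bounded_near; near=> M => r /= ->.
    by near: M; exact: nbhs_pinfty_ge.
  have -> : S = (fun r => `|r|) @^-1` [set x : R | x = 1] by [].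
  by apply: preimage_closed => [r _|]; [exact: norm_continuous | exact: closed_eq].
have [c Sc cmin] := compact_EVT_min S0 cS
  (continuous_subspaceT (seminorm_continuous fZ fD)).
have c1 : `|c| = 1 by move: Sc; rewrite inE.
have c0 : c != 0 by rewrite -normr_eq0 c1 oner_eq0.
exists (f c).
  rewrite lt0r (seminorm_ge0 fZ fD) andbT; apply: contra c0 => /eqP/N0.
  by rewrite -trmx0 => /trmx_inj ->.
move=> v i; have [->|v0] := eqVneq v 0.
  by rewrite mxE normr0 mulr0 -trmx0 (seminorm_ge0 fZ fD).
have vT0 : 0 < `|v^T| by rewrite normr_gt0 trmx_eq0.
have : f c <= f (`|v^T|^-1 *: v^T).
  by apply: cmin; rewrite inE /S /= normrZ normfV normr_id mulVf ?gt_eqF.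
rewrite fZ normfV normr_id /f trmxK ler_pdivlMl // => le_cv.
apply: le_trans le_cv; rewrite mulrC ler_wpM2r ?(seminorm_ge0 fZ fD) //.
by have := mx_entry_le_norm v^T 0 i; rewrite mxE.
Unshelve. all: by end_near. Qed.

Section DotProduct.
Context {R : realType} {k : nat}.
Implicit Types u v w : 'cV[R]_k.

Lemma dotvC u v : dotv u v = dotv v u.
Proof. by apply: eq_bigr => i _; rewrite mulrC. Qed.

Lemma dotvDr u v w : dotv u (v + w) = dotv u v + dotv u w.
Proof. by rewrite /dotv -big_split; apply: eq_bigr => i _; rewrite mxE mulrDr. Qed.

Lemma dotvZr u a v : dotv u (a *: v) = a * dotv u v.
Proof. by rewrite /dotv mulr_sumr; apply: eq_bigr => i _; rewrite mxE mulrCA. Qed.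

Lemma dotvDl u v w : dotv (v + w) u = dotv v u + dotv w u.
Proof. by rewrite dotvC dotvDr !(dotvC u). Qed.

Lemma dotvZl u a v : dotv (a *: v) u = a * dotv v u.
Proof. by rewrite dotvC dotvZr dotvC. Qed.

Lemma dotvBr u v w : dotv u (v - w) = dotv u v - dotv u w.
Proof. by rewrite dotvDr -scaleN1r dotvZr mulN1r. Qed.

Lemma dotvBl u v w : dotv (v - w) u = dotv v u - dotv w u.
Proof. by rewrite dotvC dotvBr !(dotvC u). Qed.

Lemma dotv0r u : dotv u 0 = 0.
Proof. by rewrite -(scale0r 0) dotvZr mul0r. Qed.

Lemma dotvvE v : dotv v v = \sum_i v i 0 ^+ 2.
Proof. by apply: eq_bigr => i _; rewrite expr2. Qed.

Lemma dotvv_ge0 v : 0 <= dotv v v.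
Proof. by rewrite dotvvE sumr_ge0 // => i _; rewrite sqr_ge0. Qed.

Lemma enorm_sqr v : enorm v ^+ 2 = dotv v v.
Proof. by rewrite sqr_sqrtr // dotvv_ge0. Qed.

Lemma enormZ a v : enorm (a *: v) = `|a| * enorm v.
Proof. by rewrite /enorm dotvZl dotvZr mulrA -expr2 sqrtrM ?sqr_ge0 // sqrtr_sqr. Qed.

Lemma entry_le_enorm v i : `|v i 0| <= enorm v.
Proof.
rewrite -sqrtr_sqr ler_wsqrtr // dotvvE (bigD1 i) //= lerDl.
by rewrite sumr_ge0 // => j _; rewrite sqr_ge0.
Qed.

Lemma enorm_gt0 v : v != 0 -> 0 < enorm v.
Proof.
move=> v0; have [i vi0] : exists i, v i 0 != 0.
  apply/existsP; apply: contraNT v0; rewrite negb_exists => /forallP v0.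
  apply/eqP/matrixP => i j; rewrite (ord1 j) mxE.
  by apply/eqP; rewrite -[_ == _]negbK v0.
by apply: lt_le_trans (entry_le_enorm v i); rewrite normr_gt0.
Qed.

End DotProduct.

Section DualNorm.
Context {R : realType} {m : nat} {N : 'cV[R]_m -> R}.
Hypothesis normN : is_norm N.

Let NZ a x : N (a *: x) = `|a| * N x. Proof. by case: normN. Qed.
Let ND x y : N (x + y) <= N x + N y. Proof. by case: normN. Qed.

Let unit_ball_dotv_le : exists C, forall u z,
  N z <= 1 -> dotv u z <= C * \sum_i `|u i 0|.
Proof.
have [mu mu0 le_mu] := is_norm_ge_entry normN.
exists mu^-1 => u z Nz; rewrite mulr_sumr; apply: ler_sum => i _.
apply: le_trans (ler_norm _) _; rewrite normrM mulrC; apply: ler_wpM2r => //.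
by rewrite -(ler_pM2l mu0) mulfV ?gt_eqF // (le_trans (le_mu z i)).
Qed.

Lemma dual_norm_has_sup u : has_sup [set dotv u z | z in [set z | N z <= 1]].
Proof.
have [C leC] := unit_ball_dotv_le.
split; first by exists (dotv u 0), 0; rewrite //= (seminorm0 NZ).
by exists (C * \sum_i `|u i 0|) => _ [z /= Nz <-]; exact: leC.
Qed.

Lemma dotv_le_dual_norm u z : N z <= 1 -> dotv u z <= dual_norm N u.
Proof. by move=> Nz; apply: ub_le_sup (dual_norm_has_sup u).2 _ _; exists z. Qed.

Lemma dotv_le_mul_dual_norm c u : dotv c u <= N c * dual_norm N u.
Proof.
have [->|c0] := eqVneq c 0; first by rewrite dotvC dotv0r (seminorm0 NZ) mul0r.
have Nc0 : 0 < N c.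
  rewrite lt0r (seminorm_ge0 NZ ND) andbT.
  by apply: contra c0 => /eqP; case: normN => N0 _ _ /N0 ->.
have : N ((N c)^-1 *: c) <= 1 by rewrite NZ gtr0_norm ?invr_gt0 // mulVf ?gt_eqF.
by move/(dotv_le_dual_norm u); rewrite dotvZr ler_pdivrMl // dotvC.
Qed.

Lemma dual_norm_mulmx_le n (A : 'M[R]_(m, n)) w :
  dual_norm N (A *m w) <= op_norm N A * enorm w.
Proof.
have [C leC] := unit_ball_dotv_le.
pose B := `|C| * \sum_i \sum_j `|A i j|.
have leB v : dual_norm N (A *m v) <= B * enorm v.
  have : dual_norm N (A *m v) <= C * \sum_i `|(A *m v) i 0|.
    by apply: ge_sup (dual_norm_has_sup _).1 _ => _ [z /= Nz <-]; exact: leC.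
  move/le_trans; apply; rewrite -mulrA; apply: le_trans (ler_norm _) _.
  rewrite normrM ler_wpM2l //.
  rewrite ger0_norm ?sumr_ge0 // mulr_suml; apply: ler_sum => i _; rewrite mxE.
  apply: le_trans (ler_norm_sum _ _ _) _; rewrite mulr_suml; apply: ler_sum => j _.
  by rewrite normrM ler_wpM2l ?entry_le_enorm.
have [->|w0] := eqVneq w 0.
  by apply: le_trans (leB 0) _; rewrite /enorm dotv0r sqrtr0 !mulr0.
rewrite -ler_pdivrMr ?enorm_gt0 //; apply: ub_le_sup; last by exists w.
exists B => _ [v /= v0 <-]; rewrite ler_pdivrMr ?enorm_gt0 //; exact: leB.
Qed.

End DualNorm.

Lemma mul_le_halfsqr {R : realFieldType} {s t L : R} :
  0 < s -> 0 < t -> s * t * L ^+ 2 <= 1 ->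
  forall X Y, X * (L * Y) <= t^-1 / 2 * Y ^+ 2 + s^-1 / 2 * X ^+ 2.
Proof.
move=> s0 t0 stL X Y.
have sL : s * L ^+ 2 <= t^-1 by rewrite -(ler_pM2r t0) mulVf ?gt_eqF // mulrAC.
have sq : 0 <= s^-1 * (X - s * L * Y) ^+ 2.
  by rewrite mulr_ge0 ?sqr_ge0 // invr_ge0 ltW.
have expand : s^-1 * (X - s * L * Y) ^+ 2
    = s^-1 * X ^+ 2 - 2 * (X * (L * Y)) + s * L ^+ 2 * Y ^+ 2.
  by field; rewrite gt_eqF.
rewrite expand in sq.
have := ler_wpM2r (sqr_ge0 Y) sL; lra.
Qed.

Lemma dotv_mulmxBZ {R : realType} {m n : nat} (A : 'M[R]_(m, n)) z x y tau :
  dotv z (A *m (x - tau *: y)) = dotv z (A *m x) - tau * dotv z (A *m y).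
Proof. by rewrite mulmxBr -scalemxAr dotvBr dotvZr. Qed.

Definition pd3o_form {R : realType} {m n : nat} (A : 'M[R]_(m, n)) (tau : R)
    (a b : 'cV[R]_n) (c : 'cV[R]_m) : R :=
  tau / 2 * enorm b ^+ 2 - dotv b a - dotv c (A *m a) + tau * dotv c (A *m b).

(* With [w = a - tau b] the form is [|w|^2/(2 tau) - |a|^2/(2 tau) - <c, A w>],
   and [<c, A w> <= N c ||A|| |w|] is absorbed by Young's inequality. *)
Lemma pd3o_form_ge0 {R : realType} {m n : nat} {N : 'cV[R]_m -> R}
    {A : 'M[R]_(m, n)} {sigma tau : R} :
  is_norm N -> 0 < sigma -> 0 < tau -> sigma * tau * op_norm N A ^+ 2 <= 1 ->
  forall a b c, 0 <= tau^-1 * (2^-1 * enorm a ^+ 2) + sigma^-1 * (2^-1 * N c ^+ 2)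
                     + pd3o_form A tau a b c.
Proof.
move=> normN s0 t0 stA a b c; set w := a - tau *: b.
have Nc0 : 0 <= N c by case: normN => _ NZ ND; exact: (seminorm_ge0 NZ ND).
have sqr_w : tau^-1 / 2 * enorm w ^+ 2
    = tau^-1 * (2^-1 * enorm a ^+ 2) - dotv b a + tau / 2 * enorm b ^+ 2.
  rewrite !enorm_sqr /w !dotvBl !dotvBr !dotvZl !dotvZr (dotvC a b).
  by field; rewrite gt_eqF.
have holder : dotv c (A *m w) <= N c * (op_norm N A * enorm w).
  apply: le_trans (dotv_le_mul_dual_norm normN _ _) _.
  by rewrite ler_wpM2l ?dual_norm_mulmx_le.
have := mul_le_halfsqr s0 t0 stA (N c) (enorm w).
move: holder; rewrite /pd3o_form dotv_mulmxBZ; lra.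
Qed.

Section BilinearGap.
Context {R : realType} {p q : nat} (B : 'cV[R]_p -> 'cV[R]_q -> R).
Hypothesis BDl : forall a a' b, B (a + a') b = B a b + B a' b.
Hypothesis BZl : forall (s : R) a b, B (s *: a) b = s * B a b.
Hypothesis BDr : forall a b b', B a (b + b') = B a b + B a b'.
Hypothesis BZr : forall (s : R) a b, B a (s *: b) = s * B a b.

Lemma bilinear_convex_gap a a' b b' t :
  t * B a b + (1 - t) * B a' b' - B (t *: a + (1 - t) *: a') (t *: b + (1 - t) *: b')
  = t * (1 - t) * B (a - a') (b - b').
Proof.
have BNl a1 b1 : B (- a1) b1 = - B a1 b1 by rewrite -scaleN1r BZl mulN1r.
have BNr a1 b1 : B a1 (- b1) = - B a1 b1 by rewrite -scaleN1r BZr mulN1r.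
by rewrite !BDl !BZl !BDr !BZr !BNl !BNr; ring.
Qed.

End BilinearGap.

Lemma dotv_convex_gap {R : realType} {k : nat} (u u' v v' : 'cV[R]_k) t :
  t * dotv u v + (1 - t) * dotv u' v'
    - dotv (t *: u + (1 - t) *: u') (t *: v + (1 - t) *: v')
  = t * (1 - t) * dotv (u - u') (v - v').
Proof.
by apply: bilinear_convex_gap => *; rewrite ?dotvDl ?dotvZl ?dotvDr ?dotvZr.
Qed.

Lemma dotv_mulmx_convex_gap {R : realType} {m n : nat} (A : 'M[R]_(m, n))
    z z' x x' t :
  t * dotv z (A *m x) + (1 - t) * dotv z' (A *m x')
    - dotv (t *: z + (1 - t) *: z') (A *m (t *: x + (1 - t) *: x'))
  = t * (1 - t) * dotv (z - z') (A *m (x - x')).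
Proof.
apply: (bilinear_convex_gap (fun z x => dotv z (A *m x))) => *;
  by rewrite ?dotvDl ?dotvZl ?mulmxDr ?dotvDr -?scalemxAr ?dotvZr.
Qed.

Lemma pd3o_form_convex_gap {R : realType} {m n : nat} (A : 'M[R]_(m, n)) tau
    x y z x' y' z' t :
  t * pd3o_form A tau x y z + (1 - t) * pd3o_form A tau x' y' z'
    - pd3o_form A tau (t *: x + (1 - t) *: x') (t *: y + (1 - t) *: y')
                      (t *: z + (1 - t) *: z')
  = t * (1 - t) * pd3o_form A tau (x - x') (y - y') (z - z').
Proof.
rewrite /pd3o_form !enorm_sqr.
have := congr1 (fun r => tau / 2 * r) (dotv_convex_gap y y' y y' t).
have := dotv_convex_gap y y' x x' t.
have := dotv_mulmx_convex_gap A z z' x x' t.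
have := congr1 (fun r => tau * r) (dotv_mulmx_convex_gap A z z' y y' t).
rewrite /=; lra.
Qed.

Definition strongly_convex_on {R : realType} {k : nat} (D : set 'cV[R]_k)
    (M phi : 'cV[R]_k -> R) : Prop :=
  forall x x' t, D x -> D x' -> 0 <= t <= 1 ->
    phi (t *: x + (1 - t) *: x')
      <= t * phi x + (1 - t) * phi x' - t * (1 - t) / 2 * M (x - x') ^+ 2.

Section StrongConvexity.
Context {R : realType} {k : nat} {D : set 'cV[R]_k} {M phi : 'cV[R]_k -> R}.
Hypothesis MZ : forall a v, M (a *: v) = `|a| * M v.
Hypothesis convD : Defs.convex_set D.
Hypothesis bregman_ge : forall x x', D x -> D° x' ->
  2^-1 * M (x - x') ^+ 2 <= bregman_dist phi x x'.

(* Expand the Bregman bound at [p = t x + (1 - t) x'] towards [x] and [x']: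
   the gradient terms cancel in the convex combination. *)
Lemma strongly_convex_at_interior {x x' t} : D x -> D x' -> 0 <= t <= 1 ->
  D° (t *: x + (1 - t) *: x') ->
  phi (t *: x + (1 - t) *: x')
    <= t * phi x + (1 - t) * phi x' - t * (1 - t) / 2 * M (x - x') ^+ 2.
Proof.
move=> Dx Dx' /andP[t0 t1]; set p := _ + _ => Dp.
have := bregman_ge x p Dx Dp; have := bregman_ge x' p Dx' Dp; rewrite /bregman_dist.
have -> : x - p = (1 - t) *: (x - x').
  by rewrite /p; apply/matrixP => i j; rewrite !mxE; ring.
have -> : x' - p = - t *: (x - x').
  by rewrite /p; apply/matrixP => i j; rewrite !mxE; ring.
rewrite !MZ !dotvZr normrN !ger0_norm ?subr_ge0 //.
set G := dotv _ _; set m := M _ => ge_x' ge_x.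
have t1' : 0 <= 1 - t by rewrite subr_ge0.
by have := ler_wpM2l t0 ge_x; have := ler_wpM2l t1' ge_x'; lra.
Qed.

Lemma convex_segment {u v s} :
  D u -> D v -> 0 <= s <= 1 -> D ((1 - s) *: u + s *: v).
Proof. by move=> Du Dv s01; rewrite addrC; apply: convD. Qed.

(* The homothety of centre [u] and ratio [s] maps [D] into itself and a ball
   around [x0] contained in [D] onto a ball around the image of [x0]. *)
Lemma convex_interior_segment x0 u s : D° x0 -> D u -> 0 < s <= 1 ->
  D° ((1 - s) *: u + s *: x0).
Proof.
have normP := @nbhs_normP _ ('cV[R]_k : normedZmodType R).
move=> /normP[r r0 ball_D] Du /andP[s0 s1]; apply/normP.
exists (s * r); first exact: mulr_gt0.
move=> y /= near_y; set y' := s^-1 *: (y - (1 - s) *: u).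
have -> : y = s *: y' + (1 - s) *: u.
  by rewrite /y'; apply/matrixP => i j; rewrite !mxE; field; rewrite gt_eqF.
apply: convD; rewrite ?s1 ?ltW //; apply: ball_D => /=.
have -> : x0 - y' = s^-1 *: ((1 - s) *: u + s *: x0 - y).
  by rewrite /y'; apply/matrixP => i j; rewrite !mxE; field; rewrite gt_eqF.
by rewrite normrZ gtr0_norm ?invr_gt0 // ltr_pdivrMl.
Qed.

Lemma segment_cvg (u x0 : 'cV[R]_k) :
  (fun s : R => (1 - s) *: u + s *: x0) @ 0^'+ --> u.
Proof.
apply: cvg_at_right_filter.
have : (fun s : R => (1 - s) *: u + s *: x0) @ 0 --> (1 - 0) *: u + 0 *: x0.
  apply: cvgD; apply: cvgZr_tmp => //.
  by apply: cvgB; [exact: cvg_cst | exact: cvg_id].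
by rewrite subr0 scale1r scale0r addr0.
Qed.

Lemma within_continuous_segment_cvg x0 u : {within D, continuous phi} ->
  D° x0 -> D u -> (fun s => phi ((1 - s) *: u + s *: x0)) @ 0^'+ --> phi u.
Proof.
move=> cont_phi Dx0 Du.
have phi_u : from_subspace D phi @ within D (nbhs u) --> phi u.
  by move: (cont_phi u); rewrite /continuous_at; case: (nbhs_subspaceP D u).
have -> : (fun s => phi ((1 - s) *: u + s *: x0))
    = from_subspace D phi \o (fun s => (1 - s) *: u + s *: x0) by [].
apply: cvg_comp phi_u => P /= /(segment_cvg u x0).
have seg_D : \forall s \near 0^'+, D ((1 - s) *: u + s *: x0).
  near=> s; apply: convex_segment => //; first exact: interior_subset.
  by apply/andP; split; near: s; [exact: nbhs_right_ge | exact: nbhs_right_le ltr01].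
by move: seg_D; apply: filterS2 => s Ds /(_ Ds).
Unshelve. all: by end_near. Qed.

(* Move [x] and [x'] towards an interior point [x0]: the combination becomes
   interior, and continuity of [phi] on [D] lets the points go back. *)
Lemma bregman_strongly_convex :
  {within D, continuous phi} -> D° !=set0 -> strongly_convex_on D M phi.
Proof.
move=> cont_phi [x0 Dx0] x x' t Dx Dx' t01.
have Dp : D (t *: x + (1 - t) *: x') by exact: convD.
pose m := M (x - x').
have rhs_cvg : t * phi ((1 - s) *: x + s *: x0)
      + (1 - t) * phi ((1 - s) *: x' + s *: x0)
      - t * (1 - t) / 2 * ((1 - s) * m) ^+ 2 @[s --> 0^'+]
    --> t * phi x + (1 - t) * phi x' - t * (1 - t) / 2 * ((1 - 0) * m) ^+ 2.
  apply: cvgB; first by apply: cvgD; apply: cvgMl_tmp;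
    exact: (within_continuous_segment_cvg x0 _ cont_phi Dx0).
  apply: cvgMl_tmp; apply: cvg_at_right_filter; apply: cvgM; apply: cvgMr_tmp;
    by apply: cvgB; [exact: cvg_cst | exact: cvg_id].
rewrite subr0 mul1r in rhs_cvg.
apply: (ler_cvg_to (Fa := at_right_proper_filter 0)
  (within_continuous_segment_cvg x0 _ cont_phi Dx0 Dp) rhs_cvg).
near=> s.
have s0 : 0 < s by near: s; exact: nbhs_right_gt.
have s1 : s <= 1 by near: s; exact: nbhs_right_le ltr01.
have s01 : 0 <= s <= 1 by rewrite ltW.
have Dx0' := interior_subset Dx0.
have seg_comb : t *: ((1 - s) *: x + s *: x0) + (1 - t) *: ((1 - s) *: x' + s *: x0)
    = (1 - s) *: (t *: x + (1 - t) *: x') + s *: x0.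
  by apply/matrixP => i j; rewrite !mxE; ring.
have seg_diff : (1 - s) *: x + s *: x0 - ((1 - s) *: x' + s *: x0)
    = (1 - s) *: (x - x').
  by apply/matrixP => i j; rewrite !mxE; ring.
have := strongly_convex_at_interior
  (convex_segment Dx Dx0' s01) (convex_segment Dx' Dx0' s01) t01.
rewrite seg_comb seg_diff MZ ger0_norm ?subr_ge0 //.
by apply; apply: convex_interior_segment; rewrite ?s0.
Unshelve. all: by end_near. Qed.

End StrongConvexity.

Theorem mainTheorem7 (R : realType) (n m : nat)
    (Dp : set 'cV[R]_n) (phip : 'cV[R]_n -> R)
    (Dd : set 'cV[R]_m) (phid : 'cV[R]_m -> R)
    (Nd : 'cV[R]_m -> R) (A : 'M[R]_(m, n)) (sigma tau : R) :
  bregman_kernel Dp phip ->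
  (forall x x', Dp x -> Dp° x' ->
     bregman_dist phip x x' >= 2^-1 * enorm (x - x') ^+ 2) ->
  bregman_kernel Dd phid ->
  is_norm Nd ->
  (forall z z', Dd z -> Dd° z' ->
     bregman_dist phid z z' >= 2^-1 * Nd (z - z') ^+ 2) ->
  0 < sigma -> 0 < tau ->
  sigma * tau * op_norm Nd A ^+ 2 <= 1 ->
  convex3_on Dp [set: 'cV[R]_n] Dd
    (fun x y z => tau^-1 * phip x + sigma^-1 * phid z + tau / 2 * enorm y ^+ 2
                  - dotv y x - dotv z (A *m (x - tau *: y)))
  /\
  (forall x y z x' y' z', Dp x -> Dp° x' -> Dd z -> Dd° z' ->
     0 <= tau^-1 * bregman_dist phip x x' + sigma^-1 * bregman_dist phid z z'
          + tau / 2 * enorm (y - y') ^+ 2 - dotv (y - y') (x - x')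
          - dotv (z - z') (A *m (x - x')) + tau * dotv (z - z') (A *m (y - y'))).
Proof.
move=> [[convDp _] intDp cont_phip _ _] breg_p [[convDd _] intDd cont_phid _ _]
  normNd breg_d s0 t0 stA.
have form_ge0 := pd3o_form_ge0 normNd s0 t0 stA.
have ti0 : 0 <= tau^-1 by rewrite invr_ge0 ltW.
have si0 : 0 <= sigma^-1 by rewrite invr_ge0 ltW.
split=> [x y z x' y' z' t Dx _ Dz Dx' _ Dz' t01 | x y z x' y' z' Dx Dx' Dz Dz'].
- have NdZ : forall a v, Nd (a *: v) = `|a| * Nd v by case: normNd.
  have sc_p := bregman_strongly_convex enormZ convDp breg_p cont_phip intDp
    x x' t Dx Dx' t01.
  have sc_d := bregman_strongly_convex NdZ convDd breg_d cont_phid intDd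
    z z' t Dz Dz' t01.
  have tt0 : 0 <= t * (1 - t) by case/andP: t01 => t0' t1'; rewrite mulr_ge0 ?subr_ge0.
  have := mulr_ge0 tt0 (form_ge0 (x - x') (y - y') (z - z')).
  have := pd3o_form_convex_gap A tau x y z x' y' z' t.
  have := ler_wpM2l ti0 sc_p; have := ler_wpM2l si0 sc_d.
  rewrite /pd3o_form !dotv_mulmxBZ; lra.
- have := form_ge0 (x - x') (y - y') (z - z'); rewrite /pd3o_form.
  have := ler_wpM2l ti0 (breg_p x x' Dx Dx').
  have := ler_wpM2l si0 (breg_d z z' Dz Dz').
  lra.
Qed.
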